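(* For all $n\ge 2$, $\delta(n,2)=n-1$.
   Context: Strings here are arbitrary (not normalized) finite words. The prefix reversal (flip) $f^{(i)}$ applied to $s=s_1\cdots s_n$ ($1\le i\le n$) yields $s_i s_{i-1}\cdots s_1 s_{i+1}\cdots s_n$. Two strings are \emph{compatible} if each symbol occurs the same number of times in both. For compatible $s,t$, $d(s,t)$ is the minimum number of prefix reversals transforming $s$ into $t$. $S(n,k)$ is the set of strings of length $n$ whose set of occurring symbols is exactly $\{0,\dots,k-1\}$, and $\delta(n,k)$ is the maximum of $d(s,t)$ over all compatible pairs $s,t\in S(n,k)$. *)

From mathcomp Require Import all_boot.
Set Implicit Arguments. Unset Strict Implicit. Unset Printing Implicit Defensive.

Definition flip (i : nat) (s : seq nat) : seq nat := rev (take i s) ++ drop i s.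

Fixpoint reach (k : nat) (s t : seq nat) : Prop :=
  match k with
  | 0 => s = t
  | k'.+1 => exists i, 1 <= i <= size s /\ reach k' (flip i s) t
  end.

Definition compatible (s t : seq nat) : Prop := forall a : nat, count_mem a s = count_mem a t.

Definition is_dist (s t : seq nat) (d : nat) : Prop :=
  reach d s t /\ (forall k, reach k s t -> d <= k).

Definition inS (n k : nat) (s : seq nat) : Prop :=
  size s = n /\ (forall a, a \in s <-> a < k).

Definition is_delta (n k m : nat) : Prop :=
  (forall s t, inS n k s -> inS n k t -> compatible s t ->
     exists d, is_dist s t d /\ d <= m) /\
  (exists s t, [/\ inS n k s, inS n k t, compatible s t & is_dist s t m]).

From mathcomp Require Import all_boot zify.
From Stdlib Require Import Classical Wf_nat.

Set Implicit Arguments.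
Unset Strict Implicit.
Unset Printing Implicit Defensive.

(* Lower bound: count the adjacent positions of [s ++ [:: 0]] that carry
   different symbols.  A flip only changes the adjacency right after the
   reversed prefix (the trailing 0 provides one for the flip of the whole word),
   so it changes this count by at most one; the alternating word of length n
   has n such positions and 1^(n - n/2) 0^(n/2) has one.
   Upper bound, by induction on n: one flip (or none) makes the last symbols of
   the two binary words agree, or two flips make their last two symbols agree,
   and we recurse on the prefixes.  The only configuration where neither works,
   s = a...aa without factor bb and t = b...bb without factor aa, would give s
   more a's than b's and t more b's than a's. *)

Lemma size_flip i s : size (flip i s) = size s.
Proof. by rewrite /flip size_cat size_rev -size_cat cat_take_drop. Qed.

Lemma count_flip (a : pred nat) i s : count a (flip i s) = count a s.
Proof. by rewrite /flip count_cat count_rev -count_cat cat_take_drop. Qed.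

Lemma flipK i s : i <= size s -> flip i (flip i s) = s.
Proof.
move=> hi; have hs : size (rev (take i s)) = i by rewrite size_rev size_takel.
by rewrite /flip take_size_cat // drop_size_cat // revK cat_take_drop.
Qed.

Lemma flip1 s : flip 1 s = s.
Proof. by case: s => //= x s; rewrite /flip /= take0 drop0. Qed.

Lemma flip_size s : flip (size s) s = rev s.
Proof. by rewrite /flip take_size drop_size cats0. Qed.

Lemma flip_cat i p w : i <= size p -> flip i (p ++ w) = flip i p ++ w.
Proof.
move=> hi; rewrite /flip takel_cat // drop_cat.
case: ltnP => h; first by rewrite -catA.
have -> : i = size p by apply/eqP; rewrite eqn_leq hi h.
by rewrite subnn drop0 drop_size cats0.
Qed.

Lemma reach_add j k p r q : reach j p r -> reach k r q -> reach (j + k) p q.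
Proof.
elim: j p => [|j IH] p /=; first by move=> ->.
by move=> [i [hi hr]] hk; exists i; split => //; apply: IH hk.
Qed.

Lemma reach_size k p q : reach k p q -> size q = size p.
Proof.
elim: k p => [|k IH] p /=; first by move=> ->.
by move=> [i [_ hr]]; rewrite (IH _ hr) size_flip.
Qed.

Lemma reach_compatible k p q : reach k p q -> compatible p q.
Proof.
elim: k p => [|k IH] p /=; first by move=> -> a.
by move=> [i [_ /IH hr]] a; rewrite -hr count_flip.
Qed.

Lemma reach_sym k p q : reach k p q -> reach k q p.
Proof.
elim: k p => [|k IH] p; first by move=> /= ->.
move=> [i [/andP[hi1 hi] hr]].
have back : reach 1 (flip i p) p by exists i; rewrite size_flip hi1 hi flipK.
by rewrite -addn1; apply: reach_add (IH _ hr) back.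
Qed.

Lemma reach_catr k p q w : reach k p q -> reach k (p ++ w) (q ++ w).
Proof.
elim: k p => [|k IH] p /=; first by move=> ->.
move=> [i [/andP[hi1 hi] hr]]; exists i; rewrite flip_cat // size_cat hi1.
by split; [apply: leq_trans (leq_addr _ _) | apply: IH].
Qed.

Lemma compatible_sym p q : compatible p q -> compatible q p.
Proof. by move=> h a; rewrite h. Qed.

Lemma compatible_mem p q x : compatible p q -> (x \in p) = (x \in q).
Proof. by move=> h; rewrite -!has_pred1 !has_count h. Qed.

Lemma compatible_size p q : compatible p q -> size p = size q.
Proof. by move=> h; apply/perm_size/allP => x _; rewrite /= h. Qed.

Lemma compatible_catr p q w : compatible (p ++ w) (q ++ w) -> compatible p q.
Proof. by move=> h a; apply/eqP; rewrite -(eqn_add2r (count_mem a w)) -!count_cat h. Qed.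

Fixpoint switches_from (x : nat) (s : seq nat) : nat :=
  if s is y :: s' then (x != y) + switches_from y s' else 0.

Definition switches (s : seq nat) : nat :=
  if s is x :: s' then switches_from x s' else 0.

Definition breakpoints (s : seq nat) : nat := switches (rcons s 0).

Lemma switches_from_cat x s1 s2 :
  switches_from x (s1 ++ s2) = switches_from x s1 + switches_from (last x s1) s2.
Proof. by elim: s1 x => [|y s IH] x //=; rewrite IH addnA. Qed.

Lemma switches_cat s1 s2 :
  s1 != [::] -> switches (s1 ++ s2) = switches s1 + switches_from (last 0 s1) s2.
Proof. by case: s1 => // x s1 _ /=; rewrite switches_from_cat. Qed.

Lemma switches_rev x s : switches (rev (x :: s)) = switches_from x s.
Proof.
elim: s x => [|y s IH] x //=.
rewrite rev_cons -cats1 switches_cat; last by rewrite rev_cons; case: (rev s).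
by rewrite IH rev_cons last_rcons /= addn0 addnC eq_sym.
Qed.

Lemma switches_from_head x y s : switches_from x s <= switches_from y s + 1.
Proof. by case: s => //= z s; case: (x != z); case: (y != z) => //=; lia. Qed.

Lemma breakpoints_flip i s : 1 <= i <= size s -> breakpoints s <= breakpoints (flip i s) + 1.
Proof.
case/andP=> i_gt0 i_le; rewrite /breakpoints /flip -(cat_take_drop i s).
rewrite take_size_cat ?size_takel // drop_size_cat ?size_takel //.
have : take i s != [::] by rewrite -size_eq0 size_takel // -lt0n.
case: (take i s) => // y a _.
rewrite -!cats1 -!catA !switches_cat //; last by rewrite rev_cons; case: (rev a).
rewrite switches_rev rev_cons last_rcons /=.
by have := switches_from_head (last y a) y (drop i s ++ [:: 0]); lia.
Qed.

Lemma reach_breakpoints k s t : reach k s t -> breakpoints s <= breakpoints t + k.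
Proof.
elim: k s => [|k IH] s /=; first by move=> ->; rewrite addn0.
by move=> [i [/breakpoints_flip hi /IH hr]]; lia.
Qed.

Definition binary (s : seq nat) : bool := all (leq^~ 1) s.

Lemma binary_compatible p q : binary p -> compatible p q -> binary q.
Proof. by move=> /allP hp h; apply/allP => z; rewrite -(compatible_mem _ h); apply: hp. Qed.

Lemma bit_other a b z : a <= 1 -> b <= 1 -> z <= 1 -> a != b -> z != b -> z = a.
Proof. by move=> ha hb hz /eqP hab /eqP hzb; lia. Qed.

Lemma infix_bits a b r :
  a <= 1 -> b <= 1 -> a != b -> binary r -> b \in r -> infix [:: a; b] (a :: r).
Proof.
move=> ha hb nab; elim: r => [|z r IH] // /andP[hz br]; rewrite in_cons infix_consl.
case: (eqVneq z b) => [-> _|/(bit_other ha hb hz nab) ->]; first by rewrite /= !eqxx prefix0s.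
by move=> /(IH br) ->; rewrite orbT.
Qed.

Lemma count_bits_squarefree a b x r :
  a <= 1 -> b <= 1 -> a != b -> binary (x :: r) -> ~~ infix [:: b; b] (x :: r) ->
  count_mem b (x :: r) + (x == a) <= count_mem a (x :: r) + (last x r == b).
Proof.
move=> ha hb nab; have ab : (a == b) = false by apply: negbTE.
have ba : (b == a) = false by rewrite eq_sym.
elim: r x => [|y r IH] x /andP[hx br].
  by case: (eqVneq x b) => [->|/(bit_other ha hb hx nab) ->] /=; rewrite ?eqxx ?ab ?ba.
rewrite infix_consl negb_or /= prefix0s andbT => /andP[nbb /(IH _ br) {IH}].
case/andP: br => hy _; move: nbb.
case: (eqVneq x b) => [->|/(bit_other ha hb hx nab) ->];
  case: (eqVneq y b) => [->|/(bit_other ha hb hy nab) ->];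
  rewrite /= ?eqxx ?ab ?ba //=; lia.
Qed.

Lemma split_ends (s : seq nat) :
  1 < size s -> exists x t u y z, s = x :: t /\ s = u ++ [:: y; z].
Proof.
case/lastP: s => [|s z] //; case/lastP: s => [|u y] // _.
rewrite -!cats1 -catA /=; case: u => [|x u]; first by exists y, [:: z], [::], y, z.
by exists x, (u ++ [:: y; z]), (x :: u), y, z.
Qed.

Section UpperBound.

Variable m : nat.
Hypothesis IH : forall p q, size p < m -> binary p -> compatible p q -> reach (size p).-1 p q.

Lemma reach_via_suffix p r q w :
  size p = m -> 0 < size w < m -> binary p -> compatible p (q ++ w) ->
  reach (size w) p (r ++ w) -> reach m.-1 p (q ++ w).
Proof.
move=> hp /andP[w_gt0 w_lt] bp cpq hr.
have cpr := reach_compatible hr.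
have size_r : size r + size w = m by rewrite -size_cat (reach_size hr).
have br : binary r by move: (binary_compatible bp cpr); rewrite /binary all_cat => /andP[].
have crq : compatible r q by apply: (@compatible_catr _ _ w) => a; rewrite -cpr cpq.
have r_lt : size r < m by lia.
have := reach_add hr (reach_catr w (IH r_lt br crq)).
by have -> : size w + (size r).-1 = m.-1 by lia.
Qed.

Lemma reach_last_eq p q a :
  size (p ++ [:: a]) = m -> 1 < m -> binary (p ++ [:: a]) ->
  compatible (p ++ [:: a]) (q ++ [:: a]) -> reach m.-1 (p ++ [:: a]) (q ++ [:: a]).
Proof.
move=> hp m_gt1 bp cpq; apply: (@reach_via_suffix _ p) => //.
by exists 1; rewrite flip1 hp (ltnW m_gt1).
Qed.

Lemma reach_head_last b t q :
  size (b :: t) = m -> 1 < m -> binary (b :: t) ->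
  compatible (b :: t) (q ++ [:: b]) -> reach m.-1 (b :: t) (q ++ [:: b]).
Proof.
move=> hp m_gt1 bp cpq; apply: (@reach_via_suffix _ (rev t)) => //.
by exists (size (b :: t)); rewrite flip_size rev_cons cats1 leqnn.
Qed.

Lemma reach_pair p q c d :
  size p = m -> size (q ++ [:: c; d]) = m -> binary p ->
  compatible p (q ++ [:: c; d]) -> infix [:: c; d] p -> reach m.-1 p (q ++ [:: c; d]).
Proof.
move=> hp hq bp cpq /infixP[u [v Ep]].
case: q hq cpq => [|z q] hq cpq.
  have uv0 : size u + size v = 0 by move: hp hq; rewrite Ep !size_cat /=; lia.
  move: Ep; case: u v uv0 => [|? ?] [|? ?] //= _ ->.
  by rewrite -hq; exists 1; rewrite flip1.
apply: (@reach_via_suffix _ (rev v ++ u)) => //; first by move: hq; rewrite size_cat /=; lia.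
have flip_pair : flip (size u).+2 p = [:: d, c & rev u ++ v].
  by rewrite Ep catA /flip take_size_cat ?drop_size_cat ?size_cat ?addn2 // rev_cat.
exists (size u).+2; rewrite flip_pair; split.
  by rewrite Ep size_cat /=; lia.
exists (size p); rewrite -(size_flip (size u).+2) flip_pair flip_size; split => //=.
by rewrite !rev_cons rev_cat revK -!cats1 -!catA.
Qed.

Lemma reach_crossed p q a b t t' p2 q2 c d :
  a <= 1 -> b <= 1 -> a != b -> size p = m -> size q = m -> binary p -> compatible p q ->
  p = a :: t -> p = p2 ++ [:: c; a] -> q = b :: t' -> q = q2 ++ [:: d; b] ->
  reach m.-1 p q.
Proof.
move=> ha hb nab hp hq bp cpq Ep Ep2 Eq Eq2; have nba : b != a by rewrite eq_sym.
have bq := binary_compatible bp cpq; have cqp := compatible_sym cpq.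
have hc : c <= 1 by move/allP: bp; apply; rewrite Ep2 mem_cat mem_head orbT.
have hd : d <= 1 by move/allP: bq; apply; rewrite Eq2 mem_cat mem_head orbT.
have hp2 : size (p2 ++ [:: c; a]) = m by rewrite -Ep2.
have hq2 : size (q2 ++ [:: d; b]) = m by rewrite -Eq2.
have b_in_t : b \in t.
  by have := mem_head b t'; rewrite -Eq (compatible_mem _ cqp) Ep in_cons (negbTE nba).
have a_in_t' : a \in t'.
  by have := mem_head a t; rewrite -Ep (compatible_mem _ cpq) Eq in_cons (negbTE nab).
have bt : binary t by move: bp; rewrite Ep => /andP[].
have bt' : binary t' by move: bq; rewrite Eq => /andP[].
case: (eqVneq d a) => [da|/(bit_other hb ha hd nba) db].
  subst d; rewrite Eq2; apply: reach_pair; rewrite -?Eq2 // Ep.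
  exact: infix_bits.
subst d; case: (boolP (infix [:: b; b] p)) => [bb_p|nbb_p].
  by rewrite Eq2; apply: reach_pair; rewrite -?Eq2.
apply: reach_sym; rewrite Ep2.
case: (eqVneq c b) => [cb|/(bit_other ha hb hc nab) ca].
  subst c; apply: reach_pair; rewrite -?Ep2 // Eq.
  exact: infix_bits.
subst c; case: (boolP (infix [:: a; a] q)) => [aa_q|naa_q].
  by apply: reach_pair; rewrite -?Ep2.
have last_p : last a t = a by have /= := last_cat 0 p2 [:: a; a]; rewrite -Ep2 Ep; apply.
have last_q : last b t' = b by have /= := last_cat 0 q2 [:: b; b]; rewrite -Eq2 Eq; apply.
have p_count : count_mem b p + 1 <= count_mem a p.
  by move: (@count_bits_squarefree a b a t); rewrite -Ep last_p eqxx (negbTE nab) addn0; apply.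
have q_count : count_mem a q + 1 <= count_mem b q.
  by move: (@count_bits_squarefree b a b t'); rewrite -Eq last_q eqxx (negbTE nba) addn0; apply.
by move: p_count q_count; rewrite (cpq a) (cpq b); lia.
Qed.

Lemma reach_binary_step p q :
  size p = m -> size q = m -> binary p -> compatible p q -> reach m.-1 p q.
Proof.
move=> hp hq bp cpq; have bq := binary_compatible bp cpq.
case: (ltnP 1 m) => [m_gt1|m_le1]; last first.
  have -> : m.-1 = 0 by lia.
  move: hp hq cpq; case: p {bp} => [|x [|? ?]]; case: q {bq} => [|y [|? ?]] //= hp hq; try lia.
  by move/(_ x); rewrite /= eqxx; case: eqVneq => [->|].
have := split_ends (s:=p); rewrite hp => /(_ m_gt1) [x [t [p2 [c [a [Ep Ep2]]]]]].
have := split_ends (s:=q); rewrite hq => /(_ m_gt1) [y [t' [q2 [d [b [Eq Eq2]]]]]].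
have bit_p z : z \in p -> z <= 1 by move/allP: bp; apply.
have bit_q z : z \in q -> z <= 1 by move/allP: bq; apply.
have ha : a <= 1 by apply: bit_p; rewrite Ep2 mem_cat !inE eqxx !orbT.
have hb : b <= 1 by apply: bit_q; rewrite Eq2 mem_cat !inE eqxx !orbT.
have hx : x <= 1 by apply: bit_p; rewrite Ep mem_head.
have hy : y <= 1 by apply: bit_q; rewrite Eq mem_head.
case: (eqVneq a b) => [ab|nab].
  subst b; rewrite Ep2 Eq2 -[[:: c; a]]/([:: c] ++ [:: a]) -[[:: d; a]]/([:: d] ++ [:: a]).
  by rewrite !catA; apply: reach_last_eq; rewrite -?catA -?Ep2 -?Eq2.
have nba : b != a by rewrite eq_sym.
case: (eqVneq x b) => [xb|/(bit_other ha hb hx nab) xa].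
  subst x; rewrite Ep Eq2 -[[:: d; b]]/([:: d] ++ [:: b]) catA.
  by apply: reach_head_last; rewrite -?catA -?Ep -?Eq2.
case: (eqVneq y a) => [ya|/(bit_other hb ha hy nba) yb].
  subst y; apply: reach_sym; rewrite Eq Ep2 -[[:: c; a]]/([:: c] ++ [:: a]) catA.
  by apply: reach_head_last; rewrite -?catA -?Eq -?Ep2 1?compatible_sym.
subst x y; exact: (reach_crossed ha hb nab hp hq bp cpq Ep Ep2 Eq Eq2).
Qed.

End UpperBound.

Lemma reach_binary p q : binary p -> compatible p q -> reach (size p).-1 p q.
Proof.
move sp: (size p) => m; elim/ltn_ind: m p q sp => m IH p q hp bp cpq.
have IHm r s : size r < m -> binary r -> compatible r s -> reach (size r).-1 r s.
  by move=> r_lt; apply: IH r_lt r s erefl.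
have hq : size q = m by rewrite -(compatible_size cpq).
exact: reach_binary_step IHm _ _ hp hq bp cpq.
Qed.

Fixpoint alternating (n : nat) : seq nat :=
  if n is n'.+1 then (~~ odd n' : nat) :: alternating n' else [::].

Definition blocks (n : nat) : seq nat := nseq (n - n./2) 1 ++ nseq n./2 0.

Lemma size_alternating n : size (alternating n) = n.
Proof. by elim: n => //= n ->. Qed.

Lemma count_alternating x n :
  count_mem x (alternating n) = (x == 1) * (n - n./2) + (x == 0) * n./2.
Proof.
elim: n => [|n IH] /=; first by rewrite !muln0.
rewrite IH uphalf_half {IH}; have := odd_double_half n.
by case: (odd n) => /=; case: x => [|[|x]] /=; lia.
Qed.

Lemma count_blocks x n :
  count_mem x (blocks n) = (x == 1) * (n - n./2) + (x == 0) * n./2.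
Proof. by rewrite count_cat !count_nseq /= !(eq_sym x). Qed.

Lemma compatible_alternating_blocks n : compatible (alternating n) (blocks n).
Proof. by move=> x; rewrite count_alternating count_blocks. Qed.

Lemma switches_alternating n : switches_from (~~ odd n) (rcons (alternating n) 0) = n.+1.
Proof. by elim: n => [|n IH] //=; rewrite IH; case: (odd n). Qed.

Lemma breakpoints_alternating n : breakpoints (alternating n) = n.
Proof. by case: n => //= n; rewrite /breakpoints /= switches_alternating. Qed.

Lemma switches_from_nseq x k : switches_from x (nseq k x) = 0.
Proof. by elim: k => //= k ->; rewrite eqxx. Qed.

Lemma last_nseq (T : Type) (x : T) k : last x (nseq k x) = x.
Proof. by elim: k. Qed.

Lemma breakpoints_blocks n : 1 < n -> breakpoints (blocks n) = 1.
Proof.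
move=> n_gt1; have := odd_double_half n; rewrite /breakpoints /blocks => n_halves.
have : 0 < n./2 by case: (odd n) n_halves => /=; lia.
have : 0 < n - n./2 by lia.
case: (n - n./2) => // k _; case: n./2 => // l _.
by rewrite /= -cats1 -catA !(switches_from_cat, switches_from_nseq, last_nseq) /=
  switches_from_nseq last_nseq.
Qed.

Lemma inS_blocks n s : 1 < n -> size s = n -> compatible s (blocks n) -> inS n 2 s.
Proof.
move=> n_gt1 hs cs; split => // x; rewrite (compatible_mem x cs) mem_cat !mem_nseq.
have := odd_double_half n; case: (odd n) => /=; case: x => [|[|x]] /=; split => //; lia.
Qed.

Lemma inS_binary n s : inS n 2 s -> binary s.
Proof. by case=> _ ms; apply/allP => x /ms. Qed.

Theorem theorem5p1 (n : nat) : 2 <= n -> is_delta n 2 (n - 1).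
Proof.
move=> n_gt1; split.
  move=> s t s_in t_in cst; have hr := reach_binary (inS_binary s_in) cst.
  rewrite s_in.1 in hr.
  have [d [[hd d_min] _]] := dec_inh_nat_subset_has_unique_least_element
    (fun k => reach k s t) (fun k => classic _) (ex_intro (fun k => reach k s t) _ hr).
  by exists d; split; [split=> // k /d_min/leP | rewrite subn1; apply/leP/d_min].
have c_ab := compatible_alternating_blocks n.
have alt_in := inS_blocks n_gt1 (size_alternating n) c_ab.
have blocks_in : inS n 2 (blocks n).
  by apply: inS_blocks n_gt1 _ _ => [|x //]; rewrite -(compatible_size c_ab) size_alternating.
exists (alternating n), (blocks n); split => //; split.
  by have := reach_binary (inS_binary alt_in) c_ab; rewrite size_alternating subn1.
move=> k /reach_breakpoints; rewrite breakpoints_alternating breakpoints_blocks //; lia.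
Qed.
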